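(* For an unweighted cycle $\mathcal{C}_N$ ($N\geq3$), one has $h(1)=0$, \[ \overline{h}(1)=\begin{cases}\frac{N-1}{N},& N\text{ odd},\\ 1,& N\text{ even},\end{cases} \qquad h(k)=1-\overline{h}(k)=\frac{1}{\lfloor N/k\rfloor}\quad\text{for }2\leq k\leq N. \]
   Context: The unweighted cycle $\mathcal{C}_N$ has vertices $v_1,\ldots,v_N$ and edges exactly $\{v_i,v_{i+1}\}$ (indices mod $N$), each of weight $1$; $w_{uv}=0$ for non-edges, so every degree $d_u=2$. $|E(A,B)|:=\sum_{u\in A,v\in B}w_{uv}$, $\mathrm{vol}(A)=\sum_{u\in A}d_u$, $\overline{A}$ the complement. For nonempty $S$, $\phi(S)=|E(S,\overline{S})|/\mathrm{vol}(S)$; $h(k):=\min\max_{1\leq i\leq k}\phi(S_i)$ over all collections of $k$ nonempty pairwise disjoint vertex subsets. For disjoint $V_1,V_2$ with $V_1\cup V_2\neq\emptyset$, $\overline{\phi}(V_1,V_2)=2|E(V_1,V_2)|/\mathrm{vol}(V_1\cup V_2)$; $\overline{h}(k):=\max\min_{1\leq i\leq k}\overline{\phi}(V_{2i-1},V_{2i})$ over all collections of $k$ pairs $(V_1,V_2),\ldots,(V_{2k-1},V_{2k})$ of pairwise disjoint vertex subsets with $V_{2i-1}\cup V_{2i}\neq\emptyset$ for each $i$. *)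

From HB Require Import structures.
From mathcomp Require Import all_boot all_order all_algebra.
Set Implicit Arguments. Unset Strict Implicit. Unset Printing Implicit Defensive.
Import Order.TTheory GRing.Theory Num.Theory.
Local Open Scope ring_scope.

Section Cycle.
Variables (R : realFieldType) (N : nat).

Definition cyc_adj (u v : 'I_N) : bool :=
  (val v == (val u).+1 %% N)%N || (val u == (val v).+1 %% N)%N.

Definition cyc_w (u v : 'I_N) : R := if cyc_adj u v then 1 else 0.

Definition deg (u : 'I_N) : R := \sum_(v : 'I_N) cyc_w u v.

Definition cutE (A B : {set 'I_N}) : R := \sum_(u in A) \sum_(v in B) cyc_w u v.

Definition vol (A : {set 'I_N}) : R := \sum_(u in A) deg u.

Definition phi (Sc : {set 'I_N}) : R := cutE Sc (~: Sc) / vol Sc.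

Definition phibar (V1 V2 : {set 'I_N}) : R := 2 * cutE V1 V2 / vol (V1 :|: V2).

(* maximum / minimum of a nonempty list (value 0 on the empty list,
   never used below since all lists involved are nonempty) *)
Definition maxs (s : seq R) : R :=
  if s is x :: s' then foldr Num.max x s' else 0.
Definition mins (s : seq R) : R :=
  if s is x :: s' then foldr Num.min x s' else 0.

Definition adm_h (k : nat) (Sc : {ffun 'I_k -> {set 'I_N}}) : bool :=
  [forall i, Sc i != set0] &&
  [forall i, forall j, (i != j) ==> [disjoint Sc i & Sc j]].

(* k pairs (V_(2i-1), V_(2i)) = (V (i,false), V (i,true)) of pairwise
   disjoint subsets, with V_(2i-1) :|: V_(2i) nonempty *)
Definition adm_hbar (k : nat) (V : {ffun 'I_k * bool -> {set 'I_N}}) : bool :=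
  [forall i, (V (i, false) :|: V (i, true)) != set0] &&
  [forall a, forall b, (a != b) ==> [disjoint V a & V b]].

Definition h (k : nat) : R :=
  mins [seq maxs [seq phi (Sc i) | i <- enum 'I_k]
       | Sc : {ffun 'I_k -> {set 'I_N}} <- enum {ffun 'I_k -> {set 'I_N}} & adm_h Sc].

Definition hbar (k : nat) : R :=
  maxs [seq mins [seq phibar (V (i, false)) (V (i, true)) | i <- enum 'I_k]
       | V : {ffun 'I_k * bool -> {set 'I_N}} <- enum {ffun 'I_k * bool -> {set 'I_N}} & adm_hbar V].

End Cycle.

From HB Require Import structures.
From mathcomp Require Import all_boot all_order all_algebra.
From mathcomp Require Import zify ring.
Import Order.TTheory GRing.Theory Num.Theory.
Local Open Scope ring_scope.
Set Implicit Arguments. Unset Strict Implicit. Unset Printing Implicit Defensive.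

(* Orient the cycle by the successor map u |-> u + 1 and let [ncross A B] count the
   u in A with u + 1 in B, so that |E(A,B)| = ncross A B + ncross B A and vol A = 2|A|.
   A proper nonempty S is left by at least one oriented edge and entered by at least
   one, so phi S >= 1/|S|; one of k disjoint sets has at most N/k vertices, and k
   consecutive arcs of N %/ k vertices attain 1/(N %/ k).  For hbar, every edge between
   disjoint V1 and V2 lies inside U = V1 :|: V2, and a proper subset U of the cycle spans
   at most |U| - 1 edges, so phibar <= 1 - 1/|U|; splitting each arc by parity attains
   this.  When U is the whole cycle, all N edges join V1 to V2 only if membership in V1
   alternates along the cycle, which forces N to be even. *)

Section MaxsMins.
Variable R : realFieldType.

Lemma le_maxs (s : seq R) x : x \in s -> x <= maxs s.
Proof.
case: s => [//|y s] /=; elim: s y => [|z s IH] y /=.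
  by rewrite inE => /eqP ->.
rewrite !inE le_max => /or3P[xy|/eqP->|xs].
- by rewrite (IH y) ?orbT // inE xy.
- by rewrite lexx.
- by rewrite (IH y) ?orbT // inE xs orbT.
Qed.

Lemma maxs_le (s : seq R) a x0 :
  x0 \in s -> (forall x, x \in s -> x <= a) -> maxs s <= a.
Proof.
case: s => [//|y s] _ /=; elim: s y => [|z s IH] y /= H.
  by apply: H; rewrite inE.
rewrite ge_max H ?inE ?eqxx ?orbT //= IH // => x; rewrite inE => /orP[/eqP->|xs].
  by apply: H; rewrite inE eqxx.
by apply: H; rewrite !inE xs !orbT.
Qed.

Lemma mins_le (s : seq R) x : x \in s -> mins s <= x.
Proof.
case: s => [//|y s] /=; elim: s y => [|z s IH] y /=.
  by rewrite inE => /eqP ->.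
rewrite !inE ge_min => /or3P[xy|/eqP->|xs].
- by rewrite (IH y) ?orbT // inE xy.
- by rewrite lexx.
- by rewrite (IH y) ?orbT // inE xs orbT.
Qed.

Lemma le_mins (s : seq R) a x0 :
  x0 \in s -> (forall x, x \in s -> a <= x) -> a <= mins s.
Proof.
case: s => [//|y s] _ /=; elim: s y => [|z s IH] y /= H.
  by apply: H; rewrite inE.
rewrite le_min H ?inE ?eqxx ?orbT //= IH // => x; rewrite inE => /orP[/eqP->|xs].
  by apply: H; rewrite inE eqxx.
by apply: H; rewrite !inE xs !orbT.
Qed.

Lemma mins_ord1 (F : 'I_1 -> R) : mins [seq F i | i <- enum 'I_1] = F ord0.
Proof. by rewrite enum_ordSl /= (size0nil (size_enum_ord 0)). Qed.

Lemma ler_nat_frac (p q r s : nat) : (0 < q)%N -> (0 < s)%N ->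
  (p * s <= r * q)%N -> p%:R / q%:R <= r%:R / s%:R :> R.
Proof.
move=> q0 s0 H.
by rewrite ler_pdivrMr ?ltr0n // mulrAC ler_pdivlMr ?ltr0n // -!natrM ler_nat.
Qed.

End MaxsMins.

Lemma sum_card_disjoint_le (T : finType) k (W : 'I_k -> {set T}) :
  (forall i j, i != j -> [disjoint W i & W j]) -> (\sum_(i < k) #|W i| <= #|T|)%N.
Proof.
move=> dW.
have -> : (\sum_(i < k) #|W i| = \sum_(u : T) \sum_(i < k) (u \in W i))%N.
  rewrite exchange_big /=; apply: eq_bigr => i _.
  by rewrite -sum1_card big_mkcond /=; apply: eq_bigr => u _; case: (u \in W i).
rewrite -sum1_card; apply: leq_sum => u _.
case: (boolP [exists i, u \in W i]) => [/existsP[i ui]|].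
  rewrite (bigD1 i) //= ui big1 ?addn0 // => j ji.
  by rewrite (disjointFr (dW i j _) ui) // eq_sym.
by rewrite negb_exists => /forallP H; rewrite big1 // => i _; rewrite (negbTE (H i)).
Qed.

Lemma exists_card_le_div (T : finType) k (W : 'I_k -> {set T}) : (0 < k)%N ->
  (forall i j, i != j -> [disjoint W i & W j]) -> exists i, (#|W i| <= #|T| %/ k)%N.
Proof.
move=> k0 dW; apply/existsP; apply: contraT; rewrite negb_exists => /forallP big.
have : (\sum_(i < k) (#|T| %/ k).+1 <= \sum_(i < k) #|W i|)%N.
  by apply: leq_sum => i _; rewrite ltnNge big.
rewrite sum_nat_const card_ord => /leq_trans/(_ (sum_card_disjoint_le dW)).
by rewrite mulnC -leq_divRL // ltnn.
Qed.

Lemma exists_neq_ord k (i : 'I_k) : (1 < k)%N -> exists j : 'I_k, j != i.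
Proof.
move=> k1; case: (eqVneq (nat_of_ord i) 0%N) => e.
  by exists (Ordinal k1); apply/eqP => /(congr1 (@nat_of_ord k)) /=; lia.
by exists (Ordinal (ltnW k1)); apply/eqP => /(congr1 (@nat_of_ord k)) /=; lia.
Qed.

Lemma disjoint_neq_setT (T : finType) (A B : {set T}) :
  A != set0 -> [disjoint A & B] -> B != setT.
Proof.
by case/set0Pn=> x xA d; apply/eqP => BT; move: (disjointFr d xA); rewrite BT inE.
Qed.

Section Cycle.
Variables (R : realFieldType) (n : nat).
Hypothesis n_ge2 : (2 <= n)%N.
Local Notation N := n.+1.
Implicit Types (A B S U : {set 'I_N}) (u v : 'I_N).

Lemma val_ordS u : nat_of_ord (ordS u) = if u.+1 == N then 0%N else u.+1.
Proof.
rewrite /=; case: eqP => [->|ne]; first by rewrite modnn.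
by rewrite modn_small // ltn_neqAle ltn_ord andbT; apply/eqP.
Qed.

Lemma val_iter_ordS (a : 'I_N) j : nat_of_ord (iter j (@ordS N) a) = ((a + j) %% N)%N.
Proof.
elim: j => [|j IH] /=; first by rewrite addn0 modn_small.
by rewrite IH addnS -[(_ %% N).+1]addn1 modnDml addn1.
Qed.

Lemma iter_ordS_onto (a v : 'I_N) : exists j, v = iter j (@ordS N) a.
Proof.
exists (v + (N - a))%N; apply: val_inj => /=; rewrite val_iter_ordS.
by rewrite addnCA subnKC ?modnDr ?modn_small // ltnW.
Qed.

Lemma ordS_closed_setT A a :
  a \in A -> (forall u, u \in A -> ordS u \in A) -> A = setT.
Proof.
move=> aA H; apply/setP => v; rewrite inE; have [j ->] := iter_ordS_onto a v.
by elim: j => [|j IH] //=; apply: H.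
Qed.

Lemma card_ord_itv a b : (b <= N)%N -> #|[set u : 'I_N | (a <= u < b)%N]| = (b - a)%N.
Proof.
move=> bN; rewrite -sum1dep_card big_mkcond /=.
rewrite -(big_mkord xpredT (fun j => if (a <= j < b)%N then 1%N else 0%N)).
rewrite (big_cat_nat (leq0n b) bN) /= [X in (_ + X)%N]big1_seq ?addn0; last first.
  by move=> j /andP[_]; rewrite mem_iota => /andP[bj _]; rewrite ltnNge bj andbF.
case: (leqP a b) => ab; last first.
  rewrite big1_seq; first by apply/esym/eqP; rewrite subn_eq0 ltnW.
  by move=> j /andP[_]; rewrite mem_iota => /andP[_ jb]; case: ifP => // /andP[]; lia.
rewrite (big_cat_nat (leq0n a) ab) /= big1_seq ?add0n; last first.
  by move=> j /andP[_]; rewrite mem_iota => /andP[_ jb]; case: ifP => // /andP[]; lia.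
rewrite (eq_big_nat _ _ (F2 := fun _ => 1%N)); first by rewrite sum_nat_const_nat muln1.
by move=> j /andP[aj jb]; rewrite aj jb.
Qed.

Definition ncross A B := #|[set u in A | ordS u \in B]|.

Lemma ncross_le A B : (ncross A B <= #|A|)%N.
Proof. by apply: subset_leq_card; apply/subsetP => u; rewrite inE => /andP[]. Qed.

Lemma ncross_compl_gt0 S : S != set0 -> S != setT -> (0 < ncross S (~: S))%N.
Proof.
move=> S0 ST; rewrite lt0n cards_eq0; apply/negP => /eqP E.
case/set0Pn: S0 => a aS; move/eqP: ST; apply; apply: (ordS_closed_setT aS) => u uS.
apply: contraT => nS; have : u \in [set u in S | ordS u \in ~: S] by rewrite !inE uS.
by rewrite E inE.
Qed.

Lemma ncross_boundary_ge2 S : S != set0 -> S != setT ->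
  (2 <= ncross S (~: S) + ncross (~: S) S)%N.
Proof.
move=> S0 ST; have out := ncross_compl_gt0 S0 ST.
have into : (0 < ncross (~: S) (~: ~: S))%N.
  apply: ncross_compl_gt0; first by apply: contra ST => /eqP E; rewrite -[S]setCK E setC0.
  by apply: contra S0 => /eqP E; rewrite -[S]setCK E setCT.
rewrite setCK in into; lia.
Qed.

Lemma ncross_self_lt U : U != set0 -> U != setT -> (ncross U U < #|U|)%N.
Proof.
move=> U0 UT; rewrite ltn_neqAle ncross_le andbT; apply: contra UT => /eqP E.
have EU : [set u in U | ordS u \in U] = U.
  apply/eqP; rewrite eqEcard -E leqnn andbT.
  by apply/subsetP => u; rewrite inE => /andP[].
case/set0Pn: U0 => a aU; apply/eqP; apply: (ordS_closed_setT aU) => u.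
by rewrite -{1}EU inE => /andP[].
Qed.

Lemma ncross_addE A B : [disjoint A & B] ->
  (ncross A B + ncross B A
   = #|[set u in A | ordS u \in B] :|: [set u in B | ordS u \in A]|)%N.
Proof.
move=> d; rewrite cardsU.
have -> : [set u in A | ordS u \in B] :&: [set u in B | ordS u \in A] = set0.
  apply/setP => u; rewrite !inE; apply/negP => /andP[/andP[uA _] /andP[uB _]].
  by rewrite (disjointFr d uA) in uB.
by rewrite cards0 subn0.
Qed.

Lemma ncross_add_le_self A B : [disjoint A & B] ->
  (ncross A B + ncross B A <= ncross (A :|: B) (A :|: B))%N.
Proof.
move=> d; rewrite (ncross_addE d); apply: subset_leq_card; apply/subsetP => u.
by rewrite !inE; case/orP => /andP[-> ->]; rewrite ?orbT.
Qed.

Lemma ncross_odd_lt A B : odd N -> [disjoint A & B] -> (ncross A B + ncross B A < N)%N.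
Proof.
move=> oN d; rewrite ltn_neqAle; apply/andP; split; last first.
  apply: leq_trans (ncross_add_le_self d) _; apply: leq_trans (ncross_le _ _) _.
  by apply: leq_trans (max_card _) _; rewrite card_ord.
apply/negP => /eqP E.
have ET : [set u in A | ordS u \in B] :|: [set u in B | ordS u \in A] = setT.
  by apply/eqP; rewrite eqEcard subsetT /= cardsT card_ord -(ncross_addE d) E.
have flip u : (ordS u \in A) = ~~ (u \in A).
  have : u \in [set: 'I_N] by rewrite inE.
  rewrite -ET !inE; case: (boolP (u \in A)) => uA /=.
    case/orP => [uB|/andP[uB _]]; first by rewrite (disjointFl d uB).
    by rewrite (disjointFr d uA) in uB.
  by case/andP.
have parity j : (iter j (@ordS N) ord0 \in A) = odd j (+) (ord0 \in A).
  elim: j => [|j IH] //=; rewrite flip IH.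
  by case: (odd j); case: (_ \in A).
have loop : iter N (@ordS N) ord0 = ord0.
  by apply: val_inj; rewrite [LHS]val_iter_ordS add0n modnn.
by move: (parity N); rewrite loop oN; case: (_ \in A).
Qed.

Definition arc (a m : nat) := [set u : 'I_N | (a <= u < a + m)%N].

Lemma card_arc a m : (a + m <= N)%N -> #|arc a m| = m.
Proof. by move=> H; rewrite card_ord_itv // addKn. Qed.

Lemma ncross_arc_out a m : (a + m <= N)%N -> (ncross (arc a m) (~: arc a m) <= 1)%N.
Proof.
move=> H; apply/card_le1_eqP => u v.
rewrite !inE => /andP[/andP[u1 u2] nu] /andP[/andP[v1 v2] nv].
apply: val_inj => /=.
move: nu nv; have := val_ordS u; have := val_ordS v.
have := ltn_ord u; have := ltn_ord v.
case: ifP => /eqP ev; case: ifP => /eqP eu => lv lu -> ->.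
- lia.
- case/nandP; rewrite -ltnNge; lia.
- move=> _; case/nandP; rewrite -ltnNge; lia.
- case/nandP; rewrite -ltnNge; [lia|]; move=> h1; case/nandP; rewrite -ltnNge; lia.
Qed.

Lemma ncross_arc_in a m : (a + m <= N)%N -> (ncross (~: arc a m) (arc a m) <= 1)%N.
Proof.
move=> H.
have enters_at_a w :
    w \in [set u in ~: arc a m | ordS u \in arc a m] -> nat_of_ord (ordS w) = a.
  rewrite !inE => /andP[nw /andP[w1 w2]]; move: nw w1 w2.
  have := val_ordS w; have := ltn_ord w.
  case: ifP => /eqP ew lw ->; first lia.
  case/nandP; rewrite -ltnNge; lia.
apply/card_le1_eqP => u v uS vS; apply: ordS_inj; apply: val_inj.
by move: (enters_at_a u uS) (enters_at_a v vS) => /= -> ->.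
Qed.

Lemma arc_mul_disjoint (i j m : nat) : i != j -> (0 < m)%N ->
  [disjoint arc (i * m) m & arc (j * m) m].
Proof.
move=> ij m0; rewrite -setI_eq0; apply/eqP/setP => u; rewrite !inE.
apply/negP => /andP[/andP[a1 a2] /andP[b1 b2]].
have h1 : (i * m < j.+1 * m)%N by rewrite mulSn; lia.
have h2 : (j * m < i.+1 * m)%N by rewrite mulSn; lia.
rewrite ltn_pmul2r // in h1; rewrite ltn_pmul2r // in h2.
by move/eqP: ij; lia.
Qed.

Lemma arc_mul_fit k m (i : 'I_k) : (k * m <= N)%N -> (i * m + m <= N)%N.
Proof. by move=> H; apply: leq_trans H; rewrite -mulSnr leq_mul2r ltn_ord orbT. Qed.

Definition parity_arc (a m : nat) (b : bool) :=
  [set u : 'I_N | (a <= u < a + m)%N && (odd u == b)].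

Lemma parity_arcU a m : parity_arc a m false :|: parity_arc a m true = arc a m.
Proof. by apply/setP => u; rewrite !inE; case: (odd u); rewrite ?andbF ?andbT ?orbF. Qed.

Lemma parity_arc_disjoint a m : [disjoint parity_arc a m false & parity_arc a m true].
Proof.
by rewrite -setI_eq0; apply/eqP/setP => u; rewrite !inE; case: (odd u); rewrite ?andbF.
Qed.

Lemma ncross_parity_arc a m : (a + m <= N)%N ->
  (m - 1 <= ncross (parity_arc a m false) (parity_arc a m true)
            + ncross (parity_arc a m true) (parity_arc a m false))%N.
Proof.
move=> H; rewrite (ncross_addE (parity_arc_disjoint a m)).
have -> : (m - 1 = (a + (m - 1)) - a)%N by rewrite addKn.
rewrite -card_ord_itv; last lia.
apply: subset_leq_card; apply/subsetP => u; rewrite !inE => /andP[u1 u2].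
have vS : nat_of_ord (ordS u) = u.+1 by rewrite val_ordS; case: ifP => /eqP // e; lia.
rewrite vS /=; have -> : (a <= u < a + m)%N by lia.
have -> : (a <= u.+1 < a + m)%N by lia.
by case: (odd u).
Qed.

Lemma ncross_parity_even : ~~ odd N ->
  (N <= ncross (parity_arc 0 N false) (parity_arc 0 N true)
        + ncross (parity_arc 0 N true) (parity_arc 0 N false))%N.
Proof.
move=> eN; rewrite (ncross_addE (parity_arc_disjoint 0 N)).
apply: (@leq_trans #|[set: 'I_N]|); first by rewrite cardsT card_ord.
apply: subset_leq_card; apply/subsetP => u _; rewrite !inE !add0n !leq0n !ltn_ord /=.
have := val_ordS u; case: ifP => /eqP e /= ->; last by rewrite /=; case: (odd u).
have ou : odd u by move: eN; rewrite -(congr1 odd e) /=; case: (odd u).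
by rewrite ou.
Qed.

(* Needs N >= 3: for N = 2 both neighbours of a vertex coincide and this would count
   the edge twice. *)
Lemma cyc_wE u v : cyc_w R u v = (v == ordS u)%:R + (u == ordS v)%:R.
Proof.
have not_both : ~~ ((v == ordS u) && (u == ordS v)).
  apply/negP => /andP[/eqP e1 /eqP e2].
  move: (congr1 (@nat_of_ord N) e1) (congr1 (@nat_of_ord N) e2); rewrite !val_ordS.
  have := ltn_ord u; have := ltn_ord v.
  by case: ifP => /eqP a; case: ifP => /eqP b; lia.
rewrite /cyc_w (_ : cyc_adj u v = (v == ordS u) || (u == ordS v)) //; move: not_both.
by case: (v == ordS u); case: (u == ordS v); rewrite /= ?addr0 ?add0r.
Qed.

Lemma sumr_eq_indicator (B : {pred 'I_N}) x :
  \sum_(v in B) ((v == x)%:R : R) = (x \in B)%:R.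
Proof.
case: (boolP (x \in B)) => xB.
  by rewrite (bigD1 x) //= eqxx big1 ?addr0 // => v /andP[_ /negbTE ->].
by rewrite big1 // => v vB; case: eqP => // vx; subst; rewrite vB in xB.
Qed.

Lemma sumr_indicator_card A (P : pred 'I_N) :
  \sum_(u in A) ((P u)%:R : R) = #|[set u in A | P u]|%:R.
Proof.
rewrite -sum1dep_card natr_sum big_mkcondr /=; apply: eq_bigr => u _.
by case: (P u).
Qed.

Lemma cutE_ncross A B : cutE R A B = (ncross A B + ncross B A)%:R.
Proof.
rewrite /cutE natrD /ncross -!sumr_indicator_card.
transitivity (\sum_(u in A) \sum_(v in B) ((v == ordS u)%:R : R)
   + \sum_(u in A) \sum_(v in B) ((u == ordS v)%:R : R)).
  rewrite -big_split; apply: eq_bigr => u _; rewrite -big_split.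
  by apply: eq_bigr => v _; apply: cyc_wE.
congr (_ + _); first by apply: eq_bigr => u _; rewrite sumr_eq_indicator.
by rewrite exchange_big; apply: eq_bigr => v _; rewrite sumr_eq_indicator.
Qed.

Lemma deg_cyc u : deg R u = 2.
Proof.
rewrite /deg; under eq_bigr do rewrite cyc_wE.
rewrite big_split /=.
have -> : \sum_(i < N) ((u == ordS i)%:R : R) = \sum_(i < N) ((i == ord_pred u)%:R : R).
  apply: eq_bigr => i _; congr (_%:R).
  by rewrite eq_sym (can2_eq (@ordSK N) (@ord_predK N)).
by rewrite !(sumr_eq_indicator predT).
Qed.

Lemma vol_cyc A : vol R A = (2 * #|A|)%:R.
Proof.
by rewrite /vol; under eq_bigr do rewrite deg_cyc; rewrite sumr_const natrM mulr_natr.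
Qed.

Lemma phiE S : phi R S = (ncross S (~: S) + ncross (~: S) S)%:R / (2 * #|S|)%:R.
Proof. by rewrite /phi cutE_ncross vol_cyc. Qed.

Lemma phibarE A B :
  phibar R A B = (2 * (ncross A B + ncross B A))%:R / (2 * #|A :|: B|)%:R.
Proof. by rewrite /phibar cutE_ncross vol_cyc !natrM. Qed.

Lemma phi_ge_inv S m : S != set0 -> S != setT -> (#|S| <= m)%N -> 1 / m%:R <= phi R S.
Proof.
move=> S0 ST Sm; rewrite phiE; have := ncross_boundary_ge2 S0 ST.
have : (0 < #|S|)%N by rewrite card_gt0.
by move=> *; apply: (@ler_nat_frac _ 1); nia.
Qed.

Lemma phi_arc_le a m : (a + m <= N)%N -> (0 < m)%N -> phi R (arc a m) <= 1 / m%:R.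
Proof.
move=> H m0; rewrite phiE card_arc //.
have out := ncross_arc_out H; have into := ncross_arc_in H.
apply: (@ler_nat_frac _ _ _ 1) => //; first lia.
by rewrite mul1n leq_mul // (leq_add out into).
Qed.

Lemma phibar_le_proper A B m : [disjoint A & B] -> A :|: B != set0 -> A :|: B != setT ->
  (#|A :|: B| <= m)%N -> phibar R A B <= (m - 1)%:R / m%:R.
Proof.
move=> d U0 UT Um; rewrite phibarE.
have := leq_ltn_trans (ncross_add_le_self d) (ncross_self_lt U0 UT) => *.
by apply: ler_nat_frac; nia.
Qed.

Lemma phibar_le_odd A B : odd N -> [disjoint A & B] -> phibar R A B <= (N - 1)%:R / N%:R.
Proof.
move=> oN d; case: (eqVneq (A :|: B) set0) => [E|U0].
  by rewrite phibarE E cards0 muln0 invr0 mulr0 divr_ge0 ?ler0n.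
case: (eqVneq (A :|: B) setT) => [E|UT]; last first.
  by apply: phibar_le_proper => //; apply: leq_trans (max_card _) _; rewrite card_ord.
rewrite phibarE E cardsT card_ord; have := ncross_odd_lt oN d => *.
by apply: ler_nat_frac; nia.
Qed.

Lemma phibar_le1 A B : [disjoint A & B] -> A :|: B != set0 -> phibar R A B <= 1.
Proof.
move=> d U0; rewrite -[1](divr1 1) phibarE.
have := ncross_add_le_self d; have := ncross_le (A :|: B) (A :|: B).
have : (0 < #|A :|: B|)%N by rewrite card_gt0.
by move=> *; apply: (@ler_nat_frac _ _ _ 1 1); nia.
Qed.

Lemma phibar_parity_arc a m : (a + m <= N)%N -> (0 < m)%N ->
  (m - 1)%:R / m%:R <= phibar R (parity_arc a m false) (parity_arc a m true).
Proof.
move=> H m0; rewrite phibarE parity_arcU card_arc //; have := ncross_parity_arc H => *.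
by apply: ler_nat_frac; nia.
Qed.

Lemma phibar_parity_even : ~~ odd N ->
  1 <= phibar R (parity_arc 0 N false) (parity_arc 0 N true).
Proof.
move=> eN; rewrite -[1](divr1 1) phibarE parity_arcU card_arc //.
by have := ncross_parity_even eN => *; apply: (@ler_nat_frac _ 1 1); nia.
Qed.

Section Admissible.
Variable k : nat.
Implicit Types (Sc : {ffun 'I_k -> {set 'I_N}}) (V : {ffun 'I_k * bool -> {set 'I_N}}).

Lemma adm_h_neq0 Sc : adm_h Sc -> forall i, Sc i != set0.
Proof. by case/andP => /forallP. Qed.

Lemma adm_h_disjoint Sc : adm_h Sc -> forall i j, i != j -> [disjoint Sc i & Sc j].
Proof. by case/andP => _ /forallP H i j; move/forallP/(_ j)/implyP: (H i). Qed.

Lemma adm_hbar_neq0 V : adm_hbar V -> forall i, V (i, false) :|: V (i, true) != set0.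
Proof. by case/andP => /forallP. Qed.

Lemma adm_hbar_disjoint V : adm_hbar V -> forall a b, a != b -> [disjoint V a & V b].
Proof. by case/andP => _ /forallP H a b; move/forallP/(_ b)/implyP: (H a). Qed.

Lemma adm_hbar_pair_disjoint V : adm_hbar V -> forall i, [disjoint V (i, false) & V (i, true)].
Proof. by move=> adm i; apply: (adm_hbar_disjoint adm); rewrite xpair_eqE andbF. Qed.

Lemma adm_hbar_union_disjoint V : adm_hbar V -> forall i j, i != j ->
  [disjoint V (i, false) :|: V (i, true) & V (j, false) :|: V (j, true)].
Proof.
move=> adm i j ij; rewrite -setI_eq0; apply/eqP/setP => u; rewrite !inE.
apply/negP => /andP[ui uj].
have apart b c : u \in V (i, b) -> u \in V (j, c) -> False.
  move=> ub uc; have d : [disjoint V (i, b) & V (j, c)].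
    by apply: (adm_hbar_disjoint adm); apply: contra ij => /eqP [->].
  by rewrite (disjointFr d ub) in uc.
by case/orP: ui => ub; case/orP: uj => uc; apply: (apart _ _ ub uc).
Qed.

Lemma h_le Sc : adm_h Sc -> h R N k <= maxs [seq phi R (Sc i) | i <- enum 'I_k].
Proof. by move=> adm; apply: mins_le; apply: map_f; rewrite mem_filter adm mem_enum. Qed.

Lemma le_h a Sc0 : adm_h Sc0 ->
  (forall Sc, adm_h Sc -> a <= maxs [seq phi R (Sc i) | i <- enum 'I_k]) -> a <= h R N k.
Proof.
move=> adm0 H; apply: (le_mins (x0 := maxs [seq phi R (Sc0 i) | i <- enum 'I_k])).
  by apply: map_f; rewrite mem_filter adm0 mem_enum.
by move=> x /mapP[Sc]; rewrite mem_filter => /andP[adm _] ->; apply: H.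
Qed.

Lemma le_hbar V : adm_hbar V ->
  mins [seq phibar R (V (i, false)) (V (i, true)) | i <- enum 'I_k] <= hbar R N k.
Proof. by move=> adm; apply: le_maxs; apply: map_f; rewrite mem_filter adm mem_enum. Qed.

Lemma hbar_le a V0 : adm_hbar V0 ->
  (forall V, adm_hbar V ->
     mins [seq phibar R (V (i, false)) (V (i, true)) | i <- enum 'I_k] <= a) ->
  hbar R N k <= a.
Proof.
move=> adm0 H; apply: (maxs_le
  (x0 := mins [seq phibar R (V0 (i, false)) (V0 (i, true)) | i <- enum 'I_k])).
  by apply: map_f; rewrite mem_filter adm0 mem_enum.
by move=> x /mapP[V]; rewrite mem_filter => /andP[adm _] ->; apply: H.
Qed.

Definition arc_family m := [ffun i : 'I_k => arc (i * m) m].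

Definition parity_arc_family m :=
  [ffun p : 'I_k * bool => parity_arc (p.1 * m) m p.2].

Lemma adm_arc_family m : (0 < m)%N -> (k * m <= N)%N -> adm_h (arc_family m).
Proof.
move=> m0 km; apply/andP; split.
  by apply/forallP => i; rewrite ffunE -card_gt0 card_arc // arc_mul_fit.
apply/forallP => i; apply/forallP => j; apply/implyP => ij; rewrite !ffunE.
by apply: arc_mul_disjoint.
Qed.

Lemma adm_parity_arc_family m : (0 < m)%N -> (k * m <= N)%N ->
  adm_hbar (parity_arc_family m).
Proof.
move=> m0 km; apply/andP; split.
  by apply/forallP => i; rewrite !ffunE /= parity_arcU -card_gt0 card_arc // arc_mul_fit.
apply/forallP => -[i b]; apply/forallP => -[j c]; apply/implyP => ij; rewrite !ffunE /=.
have [eij|nij] := eqVneq i j.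
  subst j; have bc : b != c by apply: contra ij => /eqP ->.
  rewrite -setI_eq0; apply/eqP/setP => u; rewrite !inE.
  by move: bc; clear ij; case: b; case: c => //= _; case: (odd u); rewrite ?andbF.
have nij' : nat_of_ord i != j by [].
apply: disjointW (arc_mul_disjoint nij' m0).
- by apply/subsetP => u; rewrite !inE => /andP[-> _].
- by apply/subsetP => u; rewrite !inE => /andP[-> _].
Qed.

End Admissible.

Lemma h1 : h R N 1 = 0.
Proof.
have adm : adm_h [ffun i : 'I_1 => [set: 'I_N]].
  apply/andP; split; first by apply/forallP => i; rewrite ffunE; apply/set0Pn; exists ord0.
  by apply/forallP => i; apply/forallP => j; rewrite !ord1 eqxx.
apply/le_anti/andP; split.
  apply: le_trans (h_le adm) _; apply: (maxs_le (map_f _ (mem_enum _ ord0))).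
  move=> x /mapP[i _ ->]; rewrite ffunE phiE setCT.
  have none A B : A = set0 \/ B = set0 -> ncross A B = 0%N.
    by case=> ->; apply/eqP; rewrite cards_eq0; apply/eqP/setP => u; rewrite !inE ?andbF.
  rewrite (none _ set0); last by right.
  by rewrite (none set0) ?mul0r //; left.
apply: (le_h adm) => Sc _; apply: le_trans (le_maxs (map_f _ (mem_enum _ ord0))).
by rewrite phiE divr_ge0 ?ler0n.
Qed.

Lemma hbar1 : hbar R N 1 = if odd N then (N%:R - 1) / N%:R else 1.
Proof.
have adm : adm_hbar (parity_arc_family 1 N) by apply: adm_parity_arc_family; rewrite ?mul1n.
have lb : phibar R (parity_arc 0 N false) (parity_arc 0 N true) <= hbar R N 1.
  by have := le_hbar adm; rewrite mins_ord1 !ffunE /= mul0n.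
have predN : N%:R - 1 = (N - 1)%:R :> R by rewrite natrB.
apply/le_anti/andP; case: ifP => oN; split.
- apply: (hbar_le adm) => V admV; rewrite mins_ord1 predN.
  exact: phibar_le_odd (adm_hbar_pair_disjoint admV ord0).
- by rewrite predN; apply: le_trans lb; apply: phibar_parity_arc.
- apply: (hbar_le adm) => V admV; rewrite mins_ord1.
  exact: phibar_le1 (adm_hbar_pair_disjoint admV ord0) (adm_hbar_neq0 admV ord0).
- by apply: le_trans lb; apply: phibar_parity_even; rewrite oN.
Qed.

Lemma h_ge2 k : (2 <= k <= N)%N -> h R N k = 1 / (N %/ k)%:R.
Proof.
case/andP=> k2 kN; set m := (N %/ k)%N.
have k0 : (0 < k)%N by lia.
have m0 : (0 < m)%N by rewrite divn_gt0.
have km : (k * m <= N)%N by rewrite mulnC leq_divM.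
have adm := adm_arc_family m0 km.
apply/le_anti/andP; split.
  apply: le_trans (h_le adm) _; apply: (maxs_le (map_f _ (mem_enum _ (Ordinal k0)))).
  by move=> x /mapP[i _ ->]; rewrite ffunE; apply: phi_arc_le (arc_mul_fit _ km) m0.
apply: (le_h adm) => Sc admSc.
have [i small] := exists_card_le_div k0 (adm_h_disjoint admSc); rewrite card_ord in small.
have [j ji] := exists_neq_ord i k2.
apply: le_trans (le_maxs (map_f _ (mem_enum _ i))).
apply: phi_ge_inv small; first exact: adm_h_neq0.
exact: disjoint_neq_setT (adm_h_neq0 admSc j) (adm_h_disjoint admSc ji).
Qed.

Lemma hbar_ge2 k : (2 <= k <= N)%N -> hbar R N k = (N %/ k - 1)%:R / (N %/ k)%:R.
Proof.
case/andP=> k2 kN; set m := (N %/ k)%N.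
have k0 : (0 < k)%N by lia.
have m0 : (0 < m)%N by rewrite divn_gt0.
have km : (k * m <= N)%N by rewrite mulnC leq_divM.
have adm := adm_parity_arc_family m0 km.
apply/le_anti/andP; split; last first.
  apply: le_trans _ (le_hbar adm); apply: (le_mins (map_f _ (mem_enum _ (Ordinal k0)))).
  by move=> x /mapP[i _ ->]; rewrite !ffunE; apply: phibar_parity_arc (arc_mul_fit _ km) m0.
apply: (hbar_le adm) => V admV.
have [i small] := exists_card_le_div k0 (adm_hbar_union_disjoint admV).
rewrite card_ord in small.
have proper : V (i, false) :|: V (i, true) != setT.
  by apply: contraTneq small => ->; rewrite cardsT card_ord -ltnNge ltn_Pdiv.
apply: le_trans (mins_le (map_f _ (mem_enum _ i))) _.
by apply: phibar_le_proper small; [exact: adm_hbar_pair_disjoint | exact: adm_hbar_neq0 |].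
Qed.

End Cycle.

Theorem proposition7p3 (R : realFieldType) (N : nat) :
  (3 <= N)%N ->
  h R N 1 = 0 /\
  hbar R N 1 = (if odd N then (N%:R - 1) / N%:R else 1) /\
  (forall k : nat, (2 <= k <= N)%N ->
     h R N k = 1 - hbar R N k /\ 1 - hbar R N k = 1 / (N %/ k)%:R).
Proof.
case: N => [//|n] n_ge2.
split; first exact: h1.
split; first exact: hbar1.
move=> k Hk; rewrite (h_ge2 R n_ge2 Hk) (hbar_ge2 R n_ge2 Hk).
have m0 : (0 < n.+1 %/ k)%N by case/andP: Hk => k2 kN; rewrite divn_gt0 //; lia.
suff -> : 1 - (n.+1 %/ k - 1)%:R / (n.+1 %/ k)%:R = 1 / (n.+1 %/ k)%:R :> R by [].
by rewrite natrB //; field; rewrite pnatr_eq0 -lt0n.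
Qed.
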